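(* Every orbit in $\mathbf B_{IX}$ has a non-empty $\omega$-limit set, and this set is contained in $\overline{\mathbf B}_{\mathrm{VII}_0}$, the closure of the union of the three Bianchi type $\mathrm{VII}_0$ subsets.
   Context: Fix $w$ with $-\tfrac13<w<1$. Variables $(\bar H,\bar\Sigma_1,\bar\Sigma_2,\bar\Sigma_3,\bar N_1,\bar N_2,\bar N_3)\in\mathbb R^7$; set $\bar\Sigma^2=\tfrac16(\bar\Sigma_1^2+\bar\Sigma_2^2+\bar\Sigma_3^2)$ and $\bar\Omega=1-\bar\Sigma^2-\tfrac1{12}(\bar N_1^2+\bar N_2^2+\bar N_3^2)$. Admissible states satisfy $\bar\Sigma_1+\bar\Sigma_2+\bar\Sigma_3=0$, $\bar H^2+\tfrac16(\bar N_1\bar N_2+\bar N_1\bar N_3+\bar N_2\bar N_3)=1$, $\bar\Omega\ge0$. The dynamics in the time $\tau$ (increasing towards the past singularity) is $\frac{d\bar H}{d\tau}=\bar q(1-\bar H^2)-\bar F\bar H$, $\frac{d\bar\Sigma_\alpha}{d\tau}=\bar\Sigma_\alpha[(2-\bar q)\bar H-\bar F]+{}^3\bar S_\alpha$, $\frac{d\bar N_\alpha}{d\tau}=-\bar N_\alpha[\bar q\bar H+2\bar\Sigma_\alpha+\bar F]$ (no sum), with $\bar q=2\bar\Sigma^2+\tfrac12(1+3w)\bar\Omega$, $\bar F=\tfrac16(\bar N_1\bar N_2\bar\Sigma_3+\bar N_1\bar\Sigma_2\bar N_3+\bar\Sigma_1\bar N_2\bar N_3)$, ${}^3\bar S_\alpha=\tfrac13[\bar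 N_\alpha(2\bar N_\alpha-\bar N_\beta-\bar N_\gamma)-(\bar N_\beta-\bar N_\gamma)^2]$ for $(\alpha\beta\gamma)\in\{(123),(231),(312)\}$. $\mathbf B_{IX}=\{\bar N_1,\bar N_2,\bar N_3>0,\ \bar H>0,\ \bar\Omega\ge0\}$ (with the constraints), invariant for increasing $\tau$. $\omega$-limit sets are taken as $\tau\to+\infty$. The Bianchi $\mathrm{VII}_0$ subsets are $\mathcal B_{\bar N_\alpha\bar N_\beta}=\{\bar N_\alpha>0,\bar N_\beta>0,\bar N_\gamma=0,\bar H>0,\bar\Omega\ge0\}$ for $(\alpha\beta\gamma)\in\{(123),(231),(312)\}$, and $\mathbf B_{\mathrm{VII}_0}$ is their union. *)

From Stdlib Require Import Reals Lra.
Open Scope R_scope.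

(* A state (Hbar, Sigma1, Sigma2, Sigma3, N1, N2, N3) in R^7. *)
Record st : Type := mkst {
  sH : R; sS1 : R; sS2 : R; sS3 : R; sN1 : R; sN2 : R; sN3 : R }.

Definition Sig2 (p : st) : R :=
  / 6 * (sS1 p ^ 2 + sS2 p ^ 2 + sS3 p ^ 2).

Definition Omega (p : st) : R :=
  1 - Sig2 p - / 12 * (sN1 p ^ 2 + sN2 p ^ 2 + sN3 p ^ 2).

Definition qbar (w : R) (p : st) : R :=
  2 * Sig2 p + / 2 * (1 + 3 * w) * Omega p.

Definition Fbar (p : st) : R :=
  / 6 * (sN1 p * sN2 p * sS3 p + sN1 p * sS2 p * sN3 p + sS1 p * sN2 p * sN3 p).

(* 3S_alpha for (alpha beta gamma) = (123), (231), (312) *)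
Definition S3_1 (p : st) : R :=
  / 3 * (sN1 p * (2 * sN1 p - sN2 p - sN3 p) - (sN2 p - sN3 p) ^ 2).
Definition S3_2 (p : st) : R :=
  / 3 * (sN2 p * (2 * sN2 p - sN3 p - sN1 p) - (sN3 p - sN1 p) ^ 2).
Definition S3_3 (p : st) : R :=
  / 3 * (sN3 p * (2 * sN3 p - sN1 p - sN2 p) - (sN1 p - sN2 p) ^ 2).

Definition fH (w : R) (p : st) : R :=
  qbar w p * (1 - sH p ^ 2) - Fbar p * sH p.
Definition fS1 (w : R) (p : st) : R :=
  sS1 p * ((2 - qbar w p) * sH p - Fbar p) + S3_1 p.
Definition fS2 (w : R) (p : st) : R :=
  sS2 p * ((2 - qbar w p) * sH p - Fbar p) + S3_2 p.
Definition fS3 (w : R) (p : st) : R :=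
  sS3 p * ((2 - qbar w p) * sH p - Fbar p) + S3_3 p.
Definition fN1 (w : R) (p : st) : R :=
  - sN1 p * (qbar w p * sH p + 2 * sS1 p + Fbar p).
Definition fN2 (w : R) (p : st) : R :=
  - sN2 p * (qbar w p * sH p + 2 * sS2 p + Fbar p).
Definition fN3 (w : R) (p : st) : R :=
  - sN3 p * (qbar w p * sH p + 2 * sS3 p + Fbar p).

Definition admissible (p : st) : Prop :=
  sS1 p + sS2 p + sS3 p = 0 /\
  sH p ^ 2 + / 6 * (sN1 p * sN2 p + sN1 p * sN3 p + sN2 p * sN3 p) = 1 /\
  0 <= Omega p.

Definition B_IX (p : st) : Prop :=
  admissible p /\ 0 < sN1 p /\ 0 < sN2 p /\ 0 < sN3 p /\ 0 < sH p.

Definition B_N1N2 (p : st) : Prop :=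
  admissible p /\ 0 < sN1 p /\ 0 < sN2 p /\ sN3 p = 0 /\ 0 < sH p.
Definition B_N2N3 (p : st) : Prop :=
  admissible p /\ 0 < sN2 p /\ 0 < sN3 p /\ sN1 p = 0 /\ 0 < sH p.
Definition B_N3N1 (p : st) : Prop :=
  admissible p /\ 0 < sN3 p /\ 0 < sN1 p /\ sN2 p = 0 /\ 0 < sH p.

Definition B_VII0 (p : st) : Prop := B_N1N2 p \/ B_N2N3 p \/ B_N3N1 p.

Definition dist2 (p q : st) : R :=
  (sH p - sH q) ^ 2 + (sS1 p - sS1 q) ^ 2 + (sS2 p - sS2 q) ^ 2 +
  (sS3 p - sS3 q) ^ 2 + (sN1 p - sN1 q) ^ 2 + (sN2 p - sN2 q) ^ 2 +
  (sN3 p - sN3 q) ^ 2.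

Definition in_closure (P : st -> Prop) (p : st) : Prop :=
  forall eps, 0 < eps -> exists q, P q /\ dist2 p q < eps.

Definition is_solution (w : R) (x : R -> st) : Prop :=
  forall t, 0 <= t ->
    derivable_pt_lim (fun s => sH (x s)) t (fH w (x t)) /\
    derivable_pt_lim (fun s => sS1 (x s)) t (fS1 w (x t)) /\
    derivable_pt_lim (fun s => sS2 (x s)) t (fS2 w (x t)) /\
    derivable_pt_lim (fun s => sS3 (x s)) t (fS3 w (x t)) /\
    derivable_pt_lim (fun s => sN1 (x s)) t (fN1 w (x t)) /\
    derivable_pt_lim (fun s => sN2 (x s)) t (fN2 w (x t)) /\
    derivable_pt_lim (fun s => sN3 (x s)) t (fN3 w (x t)).

Definition omega_limit (x : R -> st) (p : st) : Prop :=
  forall eps T, 0 < eps -> exists t, T <= t /\ dist2 (x t) p < eps.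

(* B_IX is forward invariant: each constraint and each sign obeys a linear differential
   inequality along the flow and is therefore propagated by an integrating factor. It is
   also bounded, so every orbit has omega-limit points, and these are admissible with
   N_alpha, H >= 0.

   Delta = N1 N2 N3 / H^3 satisfies Delta' = - 3 q N1 N2 N3 / H^4 <= 0. Let p be an
   omega-limit point with N1 N2 N3 > 0. Either q(p) > 0, or q(p) = 0, which forces
   Sigma = Omega = 0 at p and then a nonzero curvature term 3S_alpha(p), so that
   Sigma_alpha, and with it q >= Sigma_alpha^2 / 3, moves away from zero during every
   passage near p. Either way each of the infinitely many passages near p costs Delta a
   fixed amount, contradicting Delta >= 0. Hence some N_alpha(p) vanishes, and such a
   state is a limit of Bianchi VII_0 states: shrink the shear slightly, lift the other
   two N's and recompute H from the Gauss constraint. *)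

From Stdlib Require Import Reals Lra Psatz List Classical.
From Coquelicot Require Import Coquelicot.
Import ListNotations.
Open Scope R_scope.

(** * Calculus on the half-line *)

Lemma dlim_eq f t l l' : derivable_pt_lim f t l -> l = l' -> derivable_pt_lim f t l'.
Proof. now intros H <-. Qed.

Lemma dlim_plus f g t a b : derivable_pt_lim f t a -> derivable_pt_lim g t b ->
  derivable_pt_lim (fun u => f u + g u) t (a + b).
Proof. apply derivable_pt_lim_plus. Qed.

Lemma dlim_minus f g t a b : derivable_pt_lim f t a -> derivable_pt_lim g t b ->
  derivable_pt_lim (fun u => f u - g u) t (a - b).
Proof. apply derivable_pt_lim_minus. Qed.

Lemma dlim_mult f g t a b : derivable_pt_lim f t a -> derivable_pt_lim g t b ->
  derivable_pt_lim (fun u => f u * g u) t (a * g t + f t * b).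
Proof. apply derivable_pt_lim_mult. Qed.

Lemma dlim_opp f t a : derivable_pt_lim f t a -> derivable_pt_lim (fun u => - f u) t (- a).
Proof. apply derivable_pt_lim_opp. Qed.

Lemma dlim_const c t : derivable_pt_lim (fun _ => c) t 0.
Proof. apply derivable_pt_lim_const. Qed.

Lemma dlim_pow f t a n : derivable_pt_lim f t a ->
  derivable_pt_lim (fun u => f u ^ n) t (INR n * f t ^ pred n * a).
Proof.
  intros H. apply (derivable_pt_lim_comp f (fun y => y ^ n)); auto.
  apply derivable_pt_lim_pow.
Qed.

Lemma dlim_div f g t a b : derivable_pt_lim f t a -> derivable_pt_lim g t b -> g t <> 0 ->
  derivable_pt_lim (fun u => f u / g u) t ((a * g t - b * f t) / (g t)²).
Proof. apply derivable_pt_lim_div. Qed.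

Lemma dlim_exp f t a : derivable_pt_lim f t a ->
  derivable_pt_lim (fun u => exp (f u)) t (exp (f t) * a).
Proof. intros H. apply (derivable_pt_lim_comp f exp); auto. apply derivable_pt_lim_exp. Qed.

Ltac dlim_tac := repeat first
  [ apply dlim_plus | apply dlim_minus | apply dlim_mult | apply dlim_opp
  | apply dlim_pow | apply dlim_const | eassumption ].

Lemma slope_lb f f' a b k : a <= b ->
  (forall c, a <= c <= b -> derivable_pt_lim f c (f' c)) ->
  (forall c, a <= c <= b -> k <= f' c) -> k * (b - a) <= f b - f a.
Proof.
  intros Hab Hd Hk. destruct (Rle_lt_or_eq_dec _ _ Hab) as [Hlt|<-]; [|lra].
  destruct (MVT_cor2 f f' a b Hlt Hd) as [c [-> Hc]].
  apply Rmult_le_compat_r; [lra|]. apply Hk; lra.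
Qed.

Lemma increment_sqr_le f f' a b K : a <= b ->
  (forall c, a <= c <= b -> derivable_pt_lim f c (f' c)) ->
  (forall c, a <= c <= b -> Rabs (f' c) <= K) -> (f b - f a) ^ 2 <= (K * (b - a)) ^ 2.
Proof.
  intros Hab Hd HK.
  assert (Hlo := slope_lb f f' a b (- K) Hab Hd
    ltac:(intros c Hc; specialize (HK c Hc); apply Rabs_le_between in HK; lra)).
  assert (Hhi := slope_lb (fun u => - f u) (fun u => - f' u) a b (- K) Hab
    ltac:(intros c Hc; apply dlim_opp, Hd, Hc)
    ltac:(intros c Hc; specialize (HK c Hc); apply Rabs_le_between in HK; lra)).
  assert (0 <= K) by (specialize (HK a ltac:(lra)); pose proof (Rabs_pos (f' a)); lra).
  nra.
Qed.

Lemma ramp_sqr_lower (f f' : R -> R) a L k : 0 < L -> 0 < k ->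
  (forall t, a <= t <= a + L -> derivable_pt_lim f t (f' t)) ->
  (forall t, a <= t <= a + L -> k <= f' t) ->
  exists b, a <= b /\ b + L / 4 <= a + L /\
    forall t, b <= t <= b + L / 4 -> (k * L / 4) ^ 2 <= f t ^ 2.
Proof.
  intros HL Hk Hd Hf. assert (0 < k * L / 4) by (apply Rdiv_lt_0_compat; nra).
  destruct (Rle_dec 0 (f (a + L / 2))) as [Hp|Hn].
  - exists (a + 3 * L / 4). split; [lra|]. split; [lra|]. intros t Ht.
    assert (S := slope_lb f f' (a + L / 2) t k ltac:(lra)
      ltac:(intros; apply Hd; lra) ltac:(intros; apply Hf; lra)).
    assert (k * L / 4 <= f t) by nra. nra.
  - exists a. split; [lra|]. split; [lra|]. intros t Ht.
    assert (S := slope_lb f f' t (a + L / 2) k ltac:(lra)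
      ltac:(intros; apply Hd; lra) ltac:(intros; apply Hf; lra)).
    assert (f t <= - (k * L / 4)) by nra. nra.
Qed.

Lemma continuity_pt_Rmax0 t : continuity_pt (fun u => Rmax u 0) t.
Proof.
  intros eps Heps. exists eps. split; auto. intros y [_ Hy]. simpl in *. unfold R_dist in *.
  unfold Rmax; destruct (Rle_dec y 0), (Rle_dec t 0); unfold Rabs in *;
  repeat destruct Rcase_abs; lra.
Qed.

(* [E = exp (- int_0^t g)]. As [g] is only assumed continuous on [0, +oo), it is
   extended by [g 0] to the left so that the fundamental theorem of calculus applies. *)
Lemma integrating_factor (f g d : R -> R) :
  (forall t, 0 <= t -> continuity_pt g t) ->
  (forall t, 0 <= t -> derivable_pt_lim f t (d t)) ->
  (forall t, 0 <= t -> g t * f t <= d t) ->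
  exists E : R -> R, (forall t, 0 < E t) /\ forall t, 0 <= t -> f 0 * E 0 <= f t * E t.
Proof.
  intros Hg Hd Hle.
  set (ge := fun u => g (Rmax u 0)).
  assert (Hge : forall t, continuity_pt ge t).
  { intros t. apply (continuity_pt_comp (fun u => Rmax u 0) g).
    - apply continuity_pt_Rmax0.
    - apply Hg, Rmax_r. }
  set (G := fun u => RInt ge 0 u).
  assert (HG : forall t, derivable_pt_lim G t (ge t)).
  { intros t. apply is_derive_Reals, (is_derive_RInt ge G 0 t).
    - apply filter_forall. intros y. apply (RInt_correct (V := R_CompleteNormedModule)).
      apply ex_RInt_continuous. intros z _. apply continuity_pt_filterlim, Hge.
    - apply continuity_pt_filterlim, Hge. }
  exists (fun t => exp (- G t)). split; [intros; apply exp_pos|].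
  intros t Ht.
  cut (0 * (t - 0) <= f t * exp (- G t) - f 0 * exp (- G 0)); [lra|].
  apply (slope_lb (fun u => f u * exp (- G u))
                  (fun u => d u * exp (- G u) + f u * (exp (- G u) * - ge u))); [lra| |].
  - intros c Hc. apply (dlim_mult f (fun u => exp (- G u))); [apply Hd; lra|].
    apply (dlim_exp (fun u => - G u)), (dlim_opp G), HG.
  - intros c Hc. unfold ge. rewrite (Rmax_left c 0) by lra.
    assert (Hp := exp_pos (- G c)). specialize (Hle c ltac:(lra)). nra.
Qed.

Section LinearSubsolution.

Variables f g : R -> R.
Hypothesis g_cont : forall t, 0 <= t -> continuity_pt g t.

Lemma subsolution_pos d : (forall t, 0 <= t -> derivable_pt_lim f t (d t)) ->
  (forall t, 0 <= t -> g t * f t <= d t) -> 0 < f 0 -> forall t, 0 <= t -> 0 < f t.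
Proof.
  intros Hd Hle H0 t Ht. destruct (integrating_factor f g d g_cont Hd Hle) as [E [HE Hf]].
  specialize (Hf t Ht). pose proof (HE 0). pose proof (HE t). nra.
Qed.

Lemma subsolution_nonneg d : (forall t, 0 <= t -> derivable_pt_lim f t (d t)) ->
  (forall t, 0 <= t -> g t * f t <= d t) -> 0 <= f 0 -> forall t, 0 <= t -> 0 <= f t.
Proof.
  intros Hd Hle H0 t Ht. destruct (integrating_factor f g d g_cont Hd Hle) as [E [HE Hf]].
  specialize (Hf t Ht). pose proof (HE 0). pose proof (HE t). nra.
Qed.

Lemma linear_zero_preserved : (forall t, 0 <= t -> derivable_pt_lim f t (g t * f t)) ->
  f 0 = 0 -> forall t, 0 <= t -> f t = 0.
Proof.
  intros Hd H0 t Ht.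
  assert (Hlo := subsolution_nonneg _ Hd ltac:(intros; lra) ltac:(lra) t Ht).
  assert (Hhi := integrating_factor (fun u => - f u) g (fun u => - (g u * f u)) g_cont
    ltac:(intros u Hu; apply dlim_opp, Hd, Hu) ltac:(intros u Hu; lra)).
  destruct Hhi as [E [HE Hf]]. specialize (Hf t Ht). pose proof (HE t). rewrite H0 in Hf. nra.
Qed.

End LinearSubsolution.

(** * Continuity on the state space *)

Lemma dist2_sym p q : dist2 p q = dist2 q p.
Proof. unfold dist2. ring. Qed.

Lemma dist2_triangle p q r : dist2 p r <= 2 * dist2 p q + 2 * dist2 q r.
Proof.
  assert (H : forall a b c : R, (a - c) ^ 2 <= 2 * (a - b) ^ 2 + 2 * (b - c) ^ 2)
    by (intros a b c; pose proof (pow2_ge_0 (a - 2 * b + c)); nra).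
  unfold dist2.
  pose proof (H (sH p) (sH q) (sH r)); pose proof (H (sS1 p) (sS1 q) (sS1 r));
  pose proof (H (sS2 p) (sS2 q) (sS2 r)); pose proof (H (sS3 p) (sS3 q) (sS3 r));
  pose proof (H (sN1 p) (sN1 q) (sN1 r)); pose proof (H (sN2 p) (sN2 q) (sN2 r));
  pose proof (H (sN3 p) (sN3 q) (sN3 r)). lra.
Qed.

Lemma coords_sq_le_dist2 p q :
  (sH p - sH q) ^ 2 <= dist2 p q /\ (sS1 p - sS1 q) ^ 2 <= dist2 p q /\
  (sS2 p - sS2 q) ^ 2 <= dist2 p q /\ (sS3 p - sS3 q) ^ 2 <= dist2 p q /\
  (sN1 p - sN1 q) ^ 2 <= dist2 p q /\ (sN2 p - sN2 q) ^ 2 <= dist2 p q /\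
  (sN3 p - sN3 q) ^ 2 <= dist2 p q.
Proof.
  unfold dist2.
  pose proof (pow2_ge_0 (sH p - sH q)); pose proof (pow2_ge_0 (sS1 p - sS1 q));
  pose proof (pow2_ge_0 (sS2 p - sS2 q)); pose proof (pow2_ge_0 (sS3 p - sS3 q));
  pose proof (pow2_ge_0 (sN1 p - sN1 q)); pose proof (pow2_ge_0 (sN2 p - sN2 q));
  pose proof (pow2_ge_0 (sN3 p - sN3 q)). repeat split; lra.
Qed.

Lemma sqr_lt_of_Rabs_lt a e : Rabs a < e -> a ^ 2 < e ^ 2.
Proof. intros H. apply Rabs_def2 in H. nra. Qed.

Lemma Rabs_lt_of_sqr_lt a e : 0 < e -> a ^ 2 < e ^ 2 -> Rabs a < e.
Proof. intros He H. apply Rabs_def1; nra. Qed.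

Lemma dist2_lt_of_coords p q e :
  Rabs (sH p - sH q) < e -> Rabs (sS1 p - sS1 q) < e -> Rabs (sS2 p - sS2 q) < e ->
  Rabs (sS3 p - sS3 q) < e -> Rabs (sN1 p - sN1 q) < e -> Rabs (sN2 p - sN2 q) < e ->
  Rabs (sN3 p - sN3 q) < e -> dist2 p q < 7 * e ^ 2.
Proof.
  intros h1 h2 h3 h4 h5 h6 h7. unfold dist2.
  apply sqr_lt_of_Rabs_lt in h1, h2, h3, h4, h5, h6, h7. lra.
Qed.

Definition continuous_st (phi : st -> R) (p : st) : Prop :=
  forall e, 0 < e -> exists d, 0 < d /\ forall q, dist2 p q < d -> Rabs (phi q - phi p) < e.

Lemma continuous_st_const c p : continuous_st (fun _ => c) p.
Proof. intros e He. exists 1. split; [lra|]. intros q _. rewrite Rminus_diag, Rabs_R0. lra. Qed.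

Lemma continuous_st_coord (c : st -> R) :
  (forall p q, (c p - c q) ^ 2 <= dist2 p q) -> forall p, continuous_st c p.
Proof.
  intros Hc p e He. exists (e ^ 2). split; [nra|]. intros q Hq.
  apply Rabs_lt_of_sqr_lt; [lra|]. specialize (Hc q p). rewrite dist2_sym in Hc. lra.
Qed.

Lemma continuous_st_sH p : continuous_st sH p.
Proof. apply continuous_st_coord. apply coords_sq_le_dist2. Qed.
Lemma continuous_st_sS1 p : continuous_st sS1 p.
Proof. apply continuous_st_coord. apply coords_sq_le_dist2. Qed.
Lemma continuous_st_sS2 p : continuous_st sS2 p.
Proof. apply continuous_st_coord. apply coords_sq_le_dist2. Qed.
Lemma continuous_st_sS3 p : continuous_st sS3 p.
Proof. apply continuous_st_coord. apply coords_sq_le_dist2. Qed.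
Lemma continuous_st_sN1 p : continuous_st sN1 p.
Proof. apply continuous_st_coord. apply coords_sq_le_dist2. Qed.
Lemma continuous_st_sN2 p : continuous_st sN2 p.
Proof. apply continuous_st_coord. apply coords_sq_le_dist2. Qed.
Lemma continuous_st_sN3 p : continuous_st sN3 p.
Proof. apply continuous_st_coord. apply coords_sq_le_dist2. Qed.

Lemma continuous_st_plus f g p : continuous_st f p -> continuous_st g p ->
  continuous_st (fun q => f q + g q) p.
Proof.
  intros Hf Hg e He.
  destruct (Hf (e / 2) ltac:(lra)) as [d1 [Hd1 H1]].
  destruct (Hg (e / 2) ltac:(lra)) as [d2 [Hd2 H2]].
  exists (Rmin d1 d2). split; [now apply Rmin_glb_lt|]. intros q Hq.
  specialize (H1 q (Rlt_le_trans _ _ _ Hq (Rmin_l _ _))).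
  specialize (H2 q (Rlt_le_trans _ _ _ Hq (Rmin_r _ _))).
  replace (f q + g q - (f p + g p)) with ((f q - f p) + (g q - g p)) by ring.
  pose proof (Rabs_triang (f q - f p) (g q - g p)). lra.
Qed.

Lemma continuous_st_opp f p : continuous_st f p -> continuous_st (fun q => - f q) p.
Proof.
  intros Hf e He. destruct (Hf e He) as [d [Hd H]]. exists d. split; [easy|].
  intros q Hq. replace (- f q - - f p) with (- (f q - f p)) by ring.
  rewrite Rabs_Ropp. auto.
Qed.

Lemma continuous_st_minus f g p : continuous_st f p -> continuous_st g p ->
  continuous_st (fun q => f q - g q) p.
Proof.
  intros Hf Hg. apply (continuous_st_plus f (fun q => - g q)); [easy|].
  now apply continuous_st_opp.
Qed.

Lemma continuous_st_mult f g p : continuous_st f p -> continuous_st g p ->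
  continuous_st (fun q => f q * g q) p.
Proof.
  intros Hf Hg e He.
  set (a := Rabs (f p) + 1). set (b := Rabs (g p) + 1).
  assert (Ha : 0 < a) by (pose proof (Rabs_pos (f p)); unfold a; lra).
  assert (Hb : 0 < b) by (pose proof (Rabs_pos (g p)); unfold b; lra).
  destruct (Hf (e / (2 * b)) ltac:(apply Rdiv_lt_0_compat; lra)) as [d1 [Hd1 H1]].
  destruct (Hg (Rmin 1 (e / (2 * a)))) as [d2 [Hd2 H2]].
  { apply Rmin_glb_lt; [lra|]. apply Rdiv_lt_0_compat; lra. }
  exists (Rmin d1 d2). split; [now apply Rmin_glb_lt|]. intros q Hq.
  specialize (H1 q (Rlt_le_trans _ _ _ Hq (Rmin_l _ _))).
  specialize (H2 q (Rlt_le_trans _ _ _ Hq (Rmin_r _ _))).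
  assert (Hgq : Rabs (g q) <= b).
  { pose proof (Rmin_l 1 (e / (2 * a))). pose proof (Rabs_triang_inv (g q) (g p)).
    unfold b. lra. }
  assert (Hu : Rabs (f q - f p) * b < e / 2).
  { replace (e / 2) with (e / (2 * b) * b) by (field; lra).
    apply Rmult_lt_compat_r; lra. }
  assert (Hv : Rabs (f p) * Rabs (g q - g p) <= e / 2).
  { pose proof (Rmin_r 1 (e / (2 * a))).
    replace (e / 2) with (a * (e / (2 * a))) by (field; lra).
    apply Rmult_le_compat; [apply Rabs_pos | apply Rabs_pos | unfold a; lra | lra]. }
  replace (f q * g q - f p * g p) with ((f q - f p) * g q + f p * (g q - g p)) by ring.
  pose proof (Rabs_triang ((f q - f p) * g q) (f p * (g q - g p))).
  rewrite !Rabs_mult in *.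
  pose proof (Rmult_le_compat_l (Rabs (f q - f p)) _ _ (Rabs_pos _) Hgq). lra.
Qed.

Lemma continuous_st_pow f p n : continuous_st f p -> continuous_st (fun q => f q ^ n) p.
Proof.
  intros H. induction n as [|n IH]; simpl.
  - apply continuous_st_const.
  - now apply (continuous_st_mult f (fun q => f q ^ n)).
Qed.

Ltac continuous_st_tac := repeat first
  [ apply continuous_st_plus | apply continuous_st_minus | apply continuous_st_mult
  | apply continuous_st_opp | apply continuous_st_pow | apply continuous_st_const
  | apply continuous_st_sH | apply continuous_st_sS1 | apply continuous_st_sS2
  | apply continuous_st_sS3 | apply continuous_st_sN1 | apply continuous_st_sN2
  | apply continuous_st_sN3 ].

Definition continuous_path (x : R -> st) (t : R) : Prop :=
  continuity_pt (fun u => sH (x u)) t /\ continuity_pt (fun u => sS1 (x u)) t /\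
  continuity_pt (fun u => sS2 (x u)) t /\ continuity_pt (fun u => sS3 (x u)) t /\
  continuity_pt (fun u => sN1 (x u)) t /\ continuity_pt (fun u => sN2 (x u)) t /\
  continuity_pt (fun u => sN3 (x u)) t.

Lemma continuity_pt_locally f t e : continuity_pt f t -> 0 < e ->
  locally t (fun u => Rabs (f u - f t) < e).
Proof.
  intros Hf He. apply continuity_pt_filterlim in Hf.
  exact (proj1 (filterlim_locally (F := locally t) f (f t)) Hf (mkposreal e He)).
Qed.

Lemma continuity_pt_along x phi t : continuous_path x t -> continuous_st phi (x t) ->
  continuity_pt (fun u => phi (x u)) t.
Proof.
  intros (c1 & c2 & c3 & c4 & c5 & c6 & c7) Hphi.
  apply continuity_pt_filterlim, filterlim_locally. intros eps.
  destruct (Hphi eps (cond_pos eps)) as [d [Hd Hnear]].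
  set (e := Rmin 1 (d / 7)).
  assert (He : 0 < e) by (apply Rmin_glb_lt; lra).
  assert (He1 : e <= 1) by apply Rmin_l. assert (He2 : e <= d / 7) by apply Rmin_r.
  eapply filter_imp; [|apply filter_and; [apply (continuity_pt_locally _ _ e c1 He)|]];
  [|apply filter_and; [apply (continuity_pt_locally _ _ e c2 He)|]];
  [|apply filter_and; [apply (continuity_pt_locally _ _ e c3 He)|]];
  [|apply filter_and; [apply (continuity_pt_locally _ _ e c4 He)|]];
  [|apply filter_and; [apply (continuity_pt_locally _ _ e c5 He)|]];
  [|apply filter_and; [apply (continuity_pt_locally _ _ e c6 He)
                      |apply (continuity_pt_locally _ _ e c7 He)]].
  intros u (h1 & h2 & h3 & h4 & h5 & h6 & h7).
  change (Rabs (phi (x u) - phi (x t)) < eps). apply Hnear.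
  rewrite dist2_sym. eapply Rlt_le_trans; [apply dist2_lt_of_coords; eassumption|]. nra.
Qed.

Lemma solution_continuous w x : is_solution w x -> forall t, 0 <= t -> continuous_path x t.
Proof.
  intros Hsol t Ht. destruct (Hsol t Ht) as (d1 & d2 & d3 & d4 & d5 & d6 & d7).
  repeat split; eapply derivable_continuous_pt, exist; eassumption.
Qed.

Lemma omega_limit_ge x phi p : continuous_st phi p ->
  (forall t, 0 <= t -> 0 <= phi (x t)) -> omega_limit x p -> 0 <= phi p.
Proof.
  intros Hc Hx Ho. apply Rnot_lt_le. intros Hneg.
  destruct (Hc (- phi p) ltac:(lra)) as [d [Hd H]].
  destruct (Ho d 0 Hd) as [t [Ht Htd]]. rewrite dist2_sym in Htd.
  specialize (H _ Htd). specialize (Hx t Ht). apply Rabs_def2 in H. lra.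
Qed.

Lemma omega_limit_eq x phi p : continuous_st phi p ->
  (forall t, 0 <= t -> phi (x t) = 0) -> omega_limit x p -> phi p = 0.
Proof.
  intros Hc Hx Ho.
  assert (Hge := omega_limit_ge x phi p Hc ltac:(intros t Ht; rewrite Hx; lra) Ho).
  assert (Hle := omega_limit_ge x (fun q => - phi q) p (continuous_st_opp _ _ Hc)
    ltac:(intros t Ht; cbv beta; rewrite Hx; lra) Ho).
  cbv beta in Hle. lra.
Qed.

(** * Existence of omega-limit points *)

(* One coordinate of Bolzano-Weierstrass along [t -> +oo]: [b] is the supremum of the
   levels [y] that [v] frequently exceeds, up to any tolerance, while [P] holds. *)
Lemma frequently_refine (P : R -> R -> Prop) (v : R -> R) (B : R) :
  (forall e e' t, 0 < e <= e' -> P e t -> P e' t) ->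
  (forall e T, 0 < e -> exists t, T <= t /\ P e t) ->
  (forall e t, 0 < e -> P e t -> Rabs (v t) <= B) ->
  exists b, forall e T, 0 < e -> exists t, T <= t /\ P e t /\ Rabs (v t - b) < e.
Proof.
  intros Hmono Hfreq Hbd.
  set (A := fun y => forall e T, 0 < e -> exists t, T <= t /\ P e t /\ y - e < v t).
  assert (HAB : forall y, A y -> y <= B).
  { intros y Hy. apply Rnot_lt_le. intros HBy.
    destruct (Hy (y - B) 0 ltac:(lra)) as [t [_ [Hp Hv]]].
    specialize (Hbd (y - B) t ltac:(lra) Hp). apply Rabs_le_between in Hbd. lra. }
  assert (HA : A (- B)).
  { intros e T He. destruct (Hfreq e T He) as [t [Ht Hp]]. exists t. repeat split; auto.
    specialize (Hbd _ _ He Hp). apply Rabs_le_between in Hbd. lra. }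
  destruct (completeness A) as [b [Hub Hlub]]; [now exists B | now exists (- B)|].
  exists b. intros e T He.
  assert (Hy : exists y, A y /\ b - e / 2 < y).
  { apply NNPP. intros Hn. enough (b <= b - e / 2) by lra.
    apply Hlub. intros y Hy. apply Rnot_lt_le. intros Hlt. apply Hn. now exists y. }
  destruct Hy as [y [Hy Hyb]].
  apply NNPP. intros Hn.
  enough (A (b + e / 2)) by (pose proof (Hub _ H); lra).
  intros e0 T0 He0.
  set (e1 := Rmin e0 (e / 2)).
  assert (He1 : 0 < e1) by (apply Rmin_glb_lt; lra).
  assert (e1 <= e0) by apply Rmin_l. assert (e1 <= e / 2) by apply Rmin_r.
  destruct (Hy e1 (Rmax T0 T) He1) as [t [Ht [Hp Hv]]].
  pose proof (Rmax_l T0 T). pose proof (Rmax_r T0 T).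
  assert (Hp' : forall e', e1 <= e' -> P e' t) by (intros e' He'; apply (Hmono e1); auto; lra).
  destruct (Rlt_dec (v t) (b + e)) as [Hlt|Hge].
  - exfalso. apply Hn. exists t. split; [lra|]. split; [apply Hp'; lra|].
    apply Rabs_def1; lra.
  - exists t. split; [lra|]. split; [apply Hp'; lra|lra].
Qed.

Lemma frequently_close_all (vs : list (R -> R)) (B : R) :
  (forall v, In v vs -> forall t, 0 <= t -> Rabs (v t) <= B) ->
  exists bs, forall e T, 0 < e -> exists t, T <= t /\ 0 <= t /\
    Forall2 (fun v b => Rabs (v t - b) < e) vs bs.
Proof.
  induction vs as [|v vs IH]; intros Hbd.
  - exists nil. intros e T He. exists (Rmax T 0).
    split; [apply Rmax_l|]. split; [apply Rmax_r|]. constructor.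
  - destruct IH as [bs Hbs]; [intros u Hu; apply Hbd; now right|].
    destruct (frequently_refine
                (fun e t => 0 <= t /\ Forall2 (fun v b => Rabs (v t - b) < e) vs bs) v B)
      as [b Hb].
    + intros e e' t He [Ht Hall]. split; [easy|].
      eapply Forall2_impl; [|exact Hall]. intros u c Hu; simpl in Hu; lra.
    + intros e T He. destruct (Hbs e T He) as [t Ht]. now exists t.
    + intros e t _ [Ht _]. apply Hbd; [now left|easy].
    + exists (b :: bs). intros e T He.
      destruct (Hb e T He) as [t [Ht [[Ht0 Hall] Hv]]].
      exists t. repeat split; auto.
Qed.

Lemma omega_limit_exists (x : R -> st) (B : R) :
  (forall t, 0 <= t -> Rabs (sH (x t)) <= B /\ Rabs (sS1 (x t)) <= B /\
    Rabs (sS2 (x t)) <= B /\ Rabs (sS3 (x t)) <= B /\ Rabs (sN1 (x t)) <= B /\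
    Rabs (sN2 (x t)) <= B /\ Rabs (sN3 (x t)) <= B) ->
  exists p, omega_limit x p.
Proof.
  intros Hbd.
  destruct (frequently_close_all
    [fun t => sH (x t); fun t => sS1 (x t); fun t => sS2 (x t); fun t => sS3 (x t);
     fun t => sN1 (x t); fun t => sN2 (x t); fun t => sN3 (x t)] B) as [bs Hbs].
  { intros v Hv t Ht. specialize (Hbd t Ht).
    simpl in Hv; repeat destruct Hv as [<-|Hv]; tauto. }
  destruct (Hbs 1 0 ltac:(lra)) as [t0 [_ [_ Hlen]]]. apply Forall2_length in Hlen.
  destruct bs as [|b1 [|b2 [|b3 [|b4 [|b5 [|b6 [|b7 [|]]]]]]]]; try discriminate Hlen.
  exists (mkst b1 b2 b3 b4 b5 b6 b7). intros eps T Heps.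
  set (e := Rmin 1 (eps / 7)).
  assert (He : 0 < e) by (apply Rmin_glb_lt; lra).
  assert (e <= 1) by apply Rmin_l. assert (e <= eps / 7) by apply Rmin_r.
  destruct (Hbs e T He) as [t [Ht [_ Hall]]].
  rewrite !Forall2_cons_iff in Hall. simpl in Hall.
  destruct Hall as (h1 & h2 & h3 & h4 & h5 & h6 & h7 & _).
  exists t. split; [easy|].
  eapply Rlt_le_trans; [apply dist2_lt_of_coords; eassumption|]. nra.
Qed.

(** * Invariance of B_IX *)

Lemma Sig2_nonneg p : 0 <= Sig2 p.
Proof.
  unfold Sig2. pose proof (pow2_ge_0 (sS1 p)); pose proof (pow2_ge_0 (sS2 p));
  pose proof (pow2_ge_0 (sS3 p)). lra.
Qed.

Lemma qbar_nonneg w p : -1/3 < w -> 0 <= Omega p -> 0 <= qbar w p.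
Proof. intros hw hO. unfold qbar. pose proof (Sig2_nonneg p). nra. Qed.

Lemma qbar_ge_shear w p : -1/3 < w -> 0 <= Omega p ->
  sS1 p ^ 2 / 3 <= qbar w p /\ sS2 p ^ 2 / 3 <= qbar w p /\ sS3 p ^ 2 / 3 <= qbar w p.
Proof.
  intros hw hO. unfold qbar, Sig2.
  pose proof (pow2_ge_0 (sS1 p)); pose proof (pow2_ge_0 (sS2 p));
  pose proof (pow2_ge_0 (sS3 p)).
  assert (0 <= / 2 * (1 + 3 * w) * Omega p) by (apply Rmult_le_pos; lra).
  repeat split; lra.
Qed.

Lemma qbar_zero_inv w p : -1/3 < w -> 0 <= Omega p -> qbar w p = 0 ->
  sS1 p = 0 /\ sS2 p = 0 /\ sS3 p = 0 /\ Omega p = 0.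
Proof.
  intros hw hO Hq. unfold qbar, Sig2 in Hq.
  pose proof (pow2_ge_0 (sS1 p)); pose proof (pow2_ge_0 (sS2 p));
  pose proof (pow2_ge_0 (sS3 p)).
  assert (0 <= / 2 * (1 + 3 * w) * Omega p) by (apply Rmult_le_pos; lra).
  assert (/ 2 * (1 + 3 * w) * Omega p = 0) as Hz by lra.
  apply Rmult_integral in Hz as [Hz|Hz]; [lra|].
  repeat split; nra.
Qed.

Section Invariance.

Variables (w : R) (x : R -> st).
Hypothesis hsol : is_solution w x.
Hypothesis h0 : B_IX (x 0).

Lemma continuity_pt_solution phi : (forall p, continuous_st phi p) ->
  forall t, 0 <= t -> continuity_pt (fun u => phi (x u)) t.
Proof.
  intros Hphi t Ht. apply continuity_pt_along; [|apply Hphi].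
  now apply (solution_continuous w).
Qed.

Lemma solution_sum_S : forall t, 0 <= t -> sS1 (x t) + sS2 (x t) + sS3 (x t) = 0.
Proof.
  apply (linear_zero_preserved _ (fun t => (2 - qbar w (x t)) * sH (x t) - Fbar (x t))).
  - apply (continuity_pt_solution (fun p => (2 - qbar w p) * sH p - Fbar p)).
    intros p. unfold qbar, Omega, Sig2, Fbar. continuous_st_tac.
  - intros t Ht. destruct (hsol t Ht) as (_ & d1 & d2 & d3 & _).
    eapply dlim_eq; [dlim_tac|].
    unfold fS1, fS2, fS3, S3_1, S3_2, S3_3. ring.
  - apply h0.
Qed.

Lemma solution_gauss : forall t, 0 <= t ->
  sH (x t) ^ 2 + / 6 * (sN1 (x t) * sN2 (x t) + sN1 (x t) * sN3 (x t) + sN2 (x t) * sN3 (x t)) = 1.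
Proof.
  intros t0 Ht0.
  enough (H : sH (x t0) ^ 2 + / 6 * (sN1 (x t0) * sN2 (x t0) + sN1 (x t0) * sN3 (x t0)
            + sN2 (x t0) * sN3 (x t0)) - 1 = 0) by lra.
  revert t0 Ht0.
  apply (linear_zero_preserved _ (fun t => -2 * (qbar w (x t) * sH (x t) + Fbar (x t)))).
  - apply (continuity_pt_solution (fun p => -2 * (qbar w p * sH p + Fbar p))).
    intros p. unfold qbar, Omega, Sig2, Fbar. continuous_st_tac.
  - intros t Ht. destruct (hsol t Ht) as (dH & _ & _ & _ & d4 & d5 & d6).
    eapply dlim_eq; [dlim_tac|].
    pose proof (solution_sum_S t Ht).
    unfold fH, fN1, fN2, fN3, qbar, Sig2, Omega, Fbar. simpl.
    replace (sS3 (x t)) with (- (sS1 (x t) + sS2 (x t))) by lra. ring.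
  - destruct h0 as [[_ [hg _]] _]. lra.
Qed.

Lemma solution_Omega_nonneg : forall t, 0 <= t -> 0 <= Omega (x t).
Proof.
  set (g := fun t => (1 + 3 * w) * sH (x t) - 2 * (qbar w (x t) * sH (x t) + Fbar (x t))).
  apply (subsolution_nonneg (fun t => Omega (x t)) g) with (d := fun t => g t * Omega (x t)).
  - apply (continuity_pt_solution (fun p => (1 + 3 * w) * sH p - 2 * (qbar w p * sH p + Fbar p))).
    intros p. unfold qbar, Omega, Sig2, Fbar. continuous_st_tac.
  - intros t Ht. destruct (hsol t Ht) as (_ & d1 & d2 & d3 & d4 & d5 & d6).
    unfold Omega at 1, Sig2 at 1. eapply dlim_eq; [dlim_tac|].
    pose proof (solution_sum_S t Ht). unfold g.
    unfold fS1, fS2, fS3, fN1, fN2, fN3, S3_1, S3_2, S3_3, qbar, Omega, Sig2, Fbar. simpl.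
    replace (sS3 (x t)) with (- (sS1 (x t) + sS2 (x t))) by lra. field.
  - intros; lra.
  - apply h0.
Qed.

Lemma solution_N_pos (N S : st -> R) (fN : st -> R) :
  (forall p, continuous_st S p) ->
  (forall p, fN p = - N p * (qbar w p * sH p + 2 * S p + Fbar p)) ->
  (forall t, 0 <= t -> derivable_pt_lim (fun u => N (x u)) t (fN (x t))) ->
  0 < N (x 0) -> forall t, 0 <= t -> 0 < N (x t).
Proof.
  intros HS HfN Hd.
  apply (subsolution_pos (fun t => N (x t)) (fun t => - (qbar w (x t) * sH (x t) + 2 * S (x t) + Fbar (x t))))
    with (d := fun t => fN (x t)).
  - apply (continuity_pt_solution (fun p => - (qbar w p * sH p + 2 * S p + Fbar p))).
    intros p. unfold qbar, Omega, Sig2, Fbar. continuous_st_tac. apply HS.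
  - exact Hd.
  - intros t Ht. rewrite HfN. lra.
Qed.

Lemma solution_N1_pos : forall t, 0 <= t -> 0 < sN1 (x t).
Proof.
  apply (solution_N_pos sN1 sS1 (fN1 w)); [apply continuous_st_sS1 | reflexivity | |apply h0].
  intros t Ht. apply (hsol t Ht).
Qed.

Lemma solution_N2_pos : forall t, 0 <= t -> 0 < sN2 (x t).
Proof.
  apply (solution_N_pos sN2 sS2 (fN2 w)); [apply continuous_st_sS2 | reflexivity | |apply h0].
  intros t Ht. apply (hsol t Ht).
Qed.

Lemma solution_N3_pos : forall t, 0 <= t -> 0 < sN3 (x t).
Proof.
  apply (solution_N_pos sN3 sS3 (fN3 w)); [apply continuous_st_sS3 | reflexivity | |apply h0].
  intros t Ht. apply (hsol t Ht).
Qed.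

Hypothesis hw : -1/3 < w.

Lemma solution_H_pos : forall t, 0 <= t -> 0 < sH (x t).
Proof.
  apply (subsolution_pos (fun t => sH (x t)) (fun t => - Fbar (x t))) with (d := fun t => fH w (x t)).
  - apply (continuity_pt_solution (fun p => - Fbar p)).
    intros p. unfold Fbar. continuous_st_tac.
  - intros t Ht. apply (hsol t Ht).
  - intros t Ht. unfold fH.
    pose proof (qbar_nonneg w (x t) hw (solution_Omega_nonneg t Ht)).
    pose proof (solution_gauss t Ht).
    pose proof (solution_N1_pos t Ht). pose proof (solution_N2_pos t Ht).
    pose proof (solution_N3_pos t Ht).
    assert (0 <= 1 - sH (x t) ^ 2) by nra. nra.
  - apply h0.
Qed.

Lemma solution_B_IX : forall t, 0 <= t -> B_IX (x t).
Proof.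
  intros t Ht. repeat split.
  - now apply solution_sum_S.
  - now apply solution_gauss.
  - now apply solution_Omega_nonneg.
  - now apply solution_N1_pos.
  - now apply solution_N2_pos.
  - now apply solution_N3_pos.
  - now apply solution_H_pos.
Qed.

End Invariance.

(** * Bounded speed *)

Lemma Rabs_plus_le a b A B : Rabs a <= A -> Rabs b <= B -> Rabs (a + b) <= A + B.
Proof. intros. pose proof (Rabs_triang a b). lra. Qed.

Lemma Rabs_minus_le a b A B : Rabs a <= A -> Rabs b <= B -> Rabs (a - b) <= A + B.
Proof. intros. apply Rabs_plus_le; [|rewrite Rabs_Ropp]; easy. Qed.

Lemma Rabs_mult_le a b A B : Rabs a <= A -> Rabs b <= B -> Rabs (a * b) <= A * B.
Proof. intros. rewrite Rabs_mult. apply Rmult_le_compat; auto; apply Rabs_pos. Qed.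

Lemma Rabs_opp_le a A : Rabs a <= A -> Rabs (- a) <= A.
Proof. now rewrite Rabs_Ropp. Qed.

Ltac Rabs_bound_tac := repeat first
  [ eassumption | apply Rabs_plus_le | apply Rabs_minus_le | apply Rabs_mult_le
  | apply Rabs_opp_le ].

Record bounded_state (w : R) (p : st) : Prop := {
  bounded_H : 0 <= sH p <= 1;
  bounded_S1 : Rabs (sS1 p) <= 3; bounded_S2 : Rabs (sS2 p) <= 3; bounded_S3 : Rabs (sS3 p) <= 3;
  bounded_N1 : 0 <= sN1 p <= 4; bounded_N2 : 0 <= sN2 p <= 4; bounded_N3 : 0 <= sN3 p <= 4;
  bounded_q : 0 <= qbar w p <= 4 }.

Lemma B_IX_bounded w p : -1/3 < w < 1 -> B_IX p -> bounded_state w p.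
Proof.
  intros hw [[_ [hg hO]] [n1 [n2 [n3 hH]]]].
  pose proof (qbar_nonneg w p ltac:(lra) hO). unfold qbar, Omega, Sig2 in *.
  pose proof (pow2_ge_0 (sS1 p)); pose proof (pow2_ge_0 (sS2 p)); pose proof (pow2_ge_0 (sS3 p)).
  pose proof (pow2_ge_0 (sN1 p)); pose proof (pow2_ge_0 (sN2 p)); pose proof (pow2_ge_0 (sN3 p)).
  constructor; unfold qbar, Omega, Sig2; solve [split; nra | apply Rabs_le; split; nra].
Qed.

Lemma S3_bound a b c : 0 <= a <= 4 -> 0 <= b <= 4 -> 0 <= c <= 4 ->
  Rabs (/ 3 * (a * (2 * a - b - c) - (b - c) ^ 2)) <= 16.
Proof. intros. apply Rabs_le. split; nra. Qed.

Lemma field_speed_bound w p : bounded_state w p ->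
  Rabs (fH w p) <= 200 /\ Rabs (fS1 w p) <= 200 /\ Rabs (fS2 w p) <= 200 /\
  Rabs (fS3 w p) <= 200 /\ Rabs (fN1 w p) <= 200 /\ Rabs (fN2 w p) <= 200 /\
  Rabs (fN3 w p) <= 200.
Proof.
  intros [hH h1 h2 h3 n1 n2 n3 hq].
  assert (mH : Rabs (sH p) <= 1) by (apply Rabs_le; lra).
  assert (m1 : Rabs (sN1 p) <= 4) by (apply Rabs_le; lra).
  assert (m2 : Rabs (sN2 p) <= 4) by (apply Rabs_le; lra).
  assert (m3 : Rabs (sN3 p) <= 4) by (apply Rabs_le; lra).
  assert (mq : Rabs (qbar w p) <= 4) by (apply Rabs_le; lra).
  assert (mq2 : Rabs (2 - qbar w p) <= 2) by (apply Rabs_le; lra).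
  assert (mH2 : Rabs (1 - sH p ^ 2) <= 1) by (apply Rabs_le; nra).
  assert (two : Rabs 2 <= 2) by (apply Rabs_le; lra).
  assert (hF : Rabs (Fbar p) <= 24).
  { unfold Fbar. rewrite Rabs_mult, (Rabs_right (/ 6)) by lra.
    enough (Rabs (sN1 p * sN2 p * sS3 p + sN1 p * sS2 p * sN3 p + sS1 p * sN2 p * sN3 p) <= 144)
      by lra.
    eapply Rle_trans; [Rabs_bound_tac|lra]. }
  pose proof (S3_bound _ _ _ n1 n2 n3). pose proof (S3_bound _ _ _ n2 n3 n1).
  pose proof (S3_bound _ _ _ n3 n1 n2).
  unfold fH, fS1, fS2, fS3, fN1, fN2, fN3, S3_1, S3_2, S3_3.
  repeat split; (eapply Rle_trans; [Rabs_bound_tac|lra]).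
Qed.

Lemma solution_dist2_increment w x : -1/3 < w < 1 -> is_solution w x -> B_IX (x 0) ->
  forall a t, 0 <= a <= t -> dist2 (x t) (x a) <= 7 * (200 * (t - a)) ^ 2.
Proof.
  intros hw hsol h0 a t Hat.
  assert (Hv : forall c, a <= c <= t -> Rabs (fH w (x c)) <= 200 /\ Rabs (fS1 w (x c)) <= 200 /\
    Rabs (fS2 w (x c)) <= 200 /\ Rabs (fS3 w (x c)) <= 200 /\ Rabs (fN1 w (x c)) <= 200 /\
    Rabs (fN2 w (x c)) <= 200 /\ Rabs (fN3 w (x c)) <= 200).
  { intros c Hc. apply field_speed_bound, B_IX_bounded; [easy|].
    apply (solution_B_IX w x hsol h0); lra. }
  assert (Hinc : forall c fc : st -> R,
    (forall u, a <= u <= t -> derivable_pt_lim (fun s => c (x s)) u (fc (x u))) ->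
    (forall u, a <= u <= t -> Rabs (fc (x u)) <= 200) ->
    (c (x t) - c (x a)) ^ 2 <= (200 * (t - a)) ^ 2).
  { intros c fc Hd Hb.
    apply (increment_sqr_le (fun u => c (x u)) (fun u => fc (x u))); auto; lra. }
  unfold dist2.
  pose proof (Hinc sH (fH w) ltac:(intros u Hu; apply (hsol u); lra)
    ltac:(intros u Hu; apply (Hv u Hu))).
  pose proof (Hinc sS1 (fS1 w) ltac:(intros u Hu; apply (hsol u); lra)
    ltac:(intros u Hu; apply (Hv u Hu))).
  pose proof (Hinc sS2 (fS2 w) ltac:(intros u Hu; apply (hsol u); lra)
    ltac:(intros u Hu; apply (Hv u Hu))).
  pose proof (Hinc sS3 (fS3 w) ltac:(intros u Hu; apply (hsol u); lra)
    ltac:(intros u Hu; apply (Hv u Hu))).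
  pose proof (Hinc sN1 (fN1 w) ltac:(intros u Hu; apply (hsol u); lra)
    ltac:(intros u Hu; apply (Hv u Hu))).
  pose proof (Hinc sN2 (fN2 w) ltac:(intros u Hu; apply (hsol u); lra)
    ltac:(intros u Hu; apply (Hv u Hu))).
  pose proof (Hinc sN3 (fN3 w) ltac:(intros u Hu; apply (hsol u); lra)
    ltac:(intros u Hu; apply (Hv u Hu))).
  lra.
Qed.

(** * The monotone function Delta *)

Definition Nprod (p : st) : R := sN1 p * sN2 p * sN3 p.
Definition Delta (p : st) : R := Nprod p / sH p ^ 3.

Lemma continuous_st_Nprod p : continuous_st Nprod p.
Proof. unfold Nprod. continuous_st_tac. Qed.

Lemma continuous_st_qbar w p : continuous_st (qbar w) p.
Proof. unfold qbar, Omega, Sig2. continuous_st_tac. Qed.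

Lemma admissible_S3_nonzero p : admissible p ->
  0 < sN1 p -> 0 < sN2 p -> 0 < sN3 p ->
  sS1 p = 0 -> sS2 p = 0 -> sS3 p = 0 -> Omega p = 0 ->
  S3_1 p <> 0 \/ S3_2 p <> 0 \/ S3_3 p <> 0.
Proof.
  intros [_ [hg _]] n1 n2 n3 s1 s2 s3 hO.
  destruct (Req_dec (S3_1 p) 0) as [e1|]; [|now left].
  destruct (Req_dec (S3_2 p) 0) as [e2|]; [|now right; left].
  destruct (Req_dec (S3_3 p) 0) as [e3|]; [|now right; right].
  exfalso.
  assert (a12 : (sN1 p - sN2 p) * (sN1 p + sN2 p - sN3 p) = 0)
    by (transitivity (S3_1 p - S3_2 p); [unfold S3_1, S3_2; field | lra]).
  assert (a23 : (sN2 p - sN3 p) * (sN2 p + sN3 p - sN1 p) = 0)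
    by (transitivity (S3_2 p - S3_3 p); [unfold S3_2, S3_3; field | lra]).
  assert (a13 : (sN1 p - sN3 p) * (sN1 p + sN3 p - sN2 p) = 0)
    by (transitivity (S3_1 p - S3_3 p); [unfold S3_1, S3_3; field | lra]).
  assert (e12 : sN1 p = sN2 p /\ sN2 p = sN3 p).
  { apply Rmult_integral in a12, a23, a13.
    destruct a12, a23, a13; split; lra. }
  destruct e12 as [e12 e23].
  unfold Omega, Sig2 in hO. rewrite s1, s2, s3 in hO. rewrite <- e23, <- e12 in hO, hg.
  nra.
Qed.

Section OmegaLimit.

Variables (w : R) (x : R -> st).
Hypothesis hw : -1/3 < w < 1.
Hypothesis hsol : is_solution w x.
Hypothesis h0 : B_IX (x 0).

Let hB : forall t, 0 <= t -> B_IX (x t) := solution_B_IX w x hsol h0 (proj1 hw).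

Lemma omega_limit_closure_B_IX p : omega_limit x p ->
  admissible p /\ 0 <= sN1 p /\ 0 <= sN2 p /\ 0 <= sN3 p /\ 0 <= sH p.
Proof.
  intros Ho. repeat split.
  - apply (omega_limit_eq x (fun q => sS1 q + sS2 q + sS3 q)); [continuous_st_tac| |easy].
    intros t Ht. apply (hB t Ht).
  - enough (H : sH p ^ 2 + / 6 * (sN1 p * sN2 p + sN1 p * sN3 p + sN2 p * sN3 p) - 1 = 0)
      by lra.
    apply (omega_limit_eq x
      (fun q => sH q ^ 2 + / 6 * (sN1 q * sN2 q + sN1 q * sN3 q + sN2 q * sN3 q) - 1));
      [continuous_st_tac| |easy].
    intros t Ht. destruct (hB t Ht) as [[_ [hg _]] _]. lra.
  - apply (omega_limit_ge x Omega); [unfold Omega, Sig2; continuous_st_tac| |easy].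
    intros t Ht. apply (hB t Ht).
  - apply (omega_limit_ge x sN1); [apply continuous_st_sN1| |easy].
    intros t Ht. destruct (hB t Ht) as [_ [h _]]. lra.
  - apply (omega_limit_ge x sN2); [apply continuous_st_sN2| |easy].
    intros t Ht. destruct (hB t Ht) as [_ [_ [h _]]]. lra.
  - apply (omega_limit_ge x sN3); [apply continuous_st_sN3| |easy].
    intros t Ht. destruct (hB t Ht) as [_ [_ [_ [h _]]]]. lra.
  - apply (omega_limit_ge x sH); [apply continuous_st_sH| |easy].
    intros t Ht. destruct (hB t Ht) as [_ [_ [_ [_ h]]]]. lra.
Qed.

Lemma Delta_derivative t : 0 <= t ->
  derivable_pt_lim (fun u => Delta (x u)) t (- 3 * qbar w (x t) * Nprod (x t) / sH (x t) ^ 4).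
Proof.
  intros Ht. destruct (hsol t Ht) as (dH & _ & _ & _ & d1 & d2 & d3).
  destruct (hB t Ht) as [[hs _] [_ [_ [_ hH]]]].
  unfold Delta, Nprod. eapply dlim_eq.
  - apply dlim_div; [dlim_tac | dlim_tac | apply pow_nonzero; lra].
  - unfold Rsqr, fH, fN1, fN2, fN3, Fbar. simpl.
    replace (sS3 (x t)) with (- (sS1 (x t) + sS2 (x t))) by lra. field. lra.
Qed.

Lemma Delta_nonneg t : 0 <= t -> 0 <= Delta (x t).
Proof.
  intros Ht. destruct (hB t Ht) as [_ [n1 [n2 [n3 hH]]]].
  unfold Delta, Nprod. apply Rle_mult_inv_pos; [|apply pow_lt; lra].
  apply Rmult_le_pos; [apply Rmult_le_pos|]; lra.
Qed.

Lemma Delta_decrease a b c m : 0 <= a <= b -> 0 <= c -> 0 <= m ->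
  (forall t, a <= t <= b -> c <= qbar w (x t) /\ m <= Nprod (x t)) ->
  Delta (x b) <= Delta (x a) - 3 * c * m * (b - a).
Proof.
  intros Hab Hc Hm Hq.
  enough (3 * c * m * (b - a) <= - Delta (x b) - - Delta (x a)) by lra.
  apply (slope_lb (fun u => - Delta (x u))
           (fun u => 3 * (qbar w (x u) * Nprod (x u) / sH (x u) ^ 4))); [lra| |].
  - intros t Ht. pose proof (hB t ltac:(lra)) as [_ [_ [_ [_ hH]]]].
    eapply dlim_eq; [apply dlim_opp, Delta_derivative; lra|]. field. lra.
  - intros t Ht. destruct (Hq t Ht) as [q1 m1].
    destruct (B_IX_bounded w (x t) hw (hB t ltac:(lra))) as [hH _ _ _ _ _ _ _].
    pose proof (hB t ltac:(lra)) as [_ [_ [_ [_ hH0]]]].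
    assert (h4 : 0 < sH (x t) ^ 4 <= 1).
    { split; [apply pow_lt; lra|]. rewrite <- (pow1 4). apply pow_incr; lra. }
    assert (c * m <= qbar w (x t) * Nprod (x t)) by (apply Rmult_le_compat; lra).
    assert (c * m <= qbar w (x t) * Nprod (x t) / sH (x t) ^ 4); [|lra].
    apply Rle_trans with (qbar w (x t) * Nprod (x t)); [easy|].
    unfold Rdiv. rewrite <- (Rmult_1_r (qbar w (x t) * Nprod (x t))) at 1.
    apply Rmult_le_compat_l; [nra|]. rewrite <- Rinv_1. apply Rinv_le_contravar; lra.
Qed.

(* [Delta >= 0] drops by at least [3 c m L] on each such interval, hence it cannot
   recur infinitely often. *)
Lemma dissipation_not_recurrent c m L : 0 < c -> 0 < m -> 0 < L ->
  ~ (forall T, exists a, T <= a /\ 0 <= a /\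
       forall t, a <= t <= a + L -> c <= qbar w (x t) /\ m <= Nprod (x t)).
Proof.
  intros Hc Hm HL Hrec.
  set (eta := 3 * c * m * L).
  assert (Heta : 0 < eta) by (unfold eta; repeat apply Rmult_lt_0_compat; lra).
  assert (Hweak : forall t, 0 <= t -> 0 <= qbar w (x t) /\ 0 <= Nprod (x t)).
  { intros t Ht. destruct (hB t Ht) as [[_ [_ hO]] [n1 [n2 [n3 _]]]]. split.
    - apply qbar_nonneg; [lra | easy].
    - unfold Nprod. apply Rmult_le_pos; [apply Rmult_le_pos|]; lra. }
  assert (Hdrop : forall n, exists t, 0 <= t /\ Delta (x t) <= Delta (x 0) - INR n * eta).
  { induction n as [|n [t [Ht IH]]].
    - exists 0. simpl. lra.
    - destruct (Hrec t) as [a [Hta [Ha Hint]]].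
      assert (d1 := Delta_decrease t a 0 0 ltac:(lra) ltac:(lra) ltac:(lra)
        ltac:(intros u Hu; apply Hweak; lra)).
      assert (d2 := Delta_decrease a (a + L) c m ltac:(lra) ltac:(lra) ltac:(lra) Hint).
      exists (a + L). split; [lra|]. rewrite S_INR. unfold eta in *. nra. }
  destruct (INR_archimed eta (Delta (x 0)) Heta) as [n Hn].
  destruct (Hdrop n) as [t [Ht Hd]]. pose proof (Delta_nonneg t Ht). lra.
Qed.

(* Each coordinate moves at speed at most 200, so after coming within [dd / 4] of [p] the
   orbit stays within [dd] for the time [L] (note [2240000 = 4 * 14 * 200 ^ 2]). *)
Lemma omega_limit_revisits p dd : omega_limit x p -> 0 < dd ->
  exists L, 0 < L /\ forall T, exists a, T <= a /\ 0 <= a /\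
    forall t, a <= t <= a + L -> dist2 p (x t) < dd.
Proof.
  intros Ho Hdd. set (L := Rmin 1 (dd / 2240000)).
  assert (HL : 0 < L) by (apply Rmin_glb_lt; lra).
  assert (L <= 1) by apply Rmin_l. assert (L <= dd / 2240000) by apply Rmin_r.
  exists L. split; [easy|]. intros T.
  destruct (Ho (dd / 4) (Rmax T 0) ltac:(lra)) as [a [Ha Hd]].
  pose proof (Rmax_l T 0). pose proof (Rmax_r T 0).
  exists a. split; [lra|]. split; [lra|]. intros t Ht.
  rewrite dist2_sym. eapply Rle_lt_trans; [apply (dist2_triangle _ (x a))|].
  pose proof (solution_dist2_increment w x hw hsol h0 a t ltac:(lra)).
  assert ((200 * (t - a)) ^ 2 <= 40000 * L) by nra.
  lra.
Qed.

Lemma omega_limit_qbar_pos p : omega_limit x p -> 0 < Nprod p -> ~ 0 < qbar w p.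
Proof.
  intros Ho HM Hq.
  destruct (continuous_st_qbar w p (qbar w p / 2) ltac:(lra)) as [d1 [Hd1 H1]].
  destruct (continuous_st_Nprod p (Nprod p / 2) ltac:(lra)) as [d2 [Hd2 H2]].
  destruct (omega_limit_revisits p (Rmin d1 d2) Ho ltac:(now apply Rmin_glb_lt))
    as [L [HL Hnear]].
  apply (dissipation_not_recurrent (qbar w p / 2) (Nprod p / 2) L); try lra.
  intros T. destruct (Hnear T) as [a [HTa [Ha Hint]]]. exists a. repeat split; auto.
  - specialize (H1 _ (Rlt_le_trans _ _ _ (Hint t H) (Rmin_l _ _))).
    apply Rabs_def2 in H1. lra.
  - specialize (H2 _ (Rlt_le_trans _ _ _ (Hint t H) (Rmin_r _ _))).
    apply Rabs_def2 in H2. lra.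
Qed.

(* At a point where [qbar] vanishes, some shear component [sig] has a nonzero drift
   [fs]; near [p] it then grows through a quarter of every visit, and [qbar >= sig^2/3]
   keeps [qbar] away from zero there. *)
Lemma omega_limit_shear_drift p (sig fs : st -> R) : omega_limit x p -> 0 < Nprod p ->
  (forall t, 0 <= t -> derivable_pt_lim (fun u => sig (x u)) t (fs (x t))) ->
  continuous_st fs p -> (forall t, 0 <= t -> sig (x t) ^ 2 / 3 <= qbar w (x t)) ->
  fs p = 0.
Proof.
  intros Ho HM Hd Hcf Hq. apply NNPP. intros Hs.
  set (k := Rabs (fs p) / 2).
  assert (Hk : 0 < k) by (unfold k; pose proof (Rabs_pos_lt _ Hs); lra).
  destruct (Hcf k Hk) as [d1 [Hd1 H1]].
  destruct (continuous_st_Nprod p (Nprod p / 2) ltac:(lra)) as [d2 [Hd2 H2]].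
  destruct (omega_limit_revisits p (Rmin d1 d2) Ho ltac:(now apply Rmin_glb_lt))
    as [L [HL Hnear]].
  assert (HkL : 0 < k * L / 4) by (apply Rdiv_lt_0_compat; nra).
  apply (dissipation_not_recurrent ((k * L / 4) ^ 2 / 3) (Nprod p / 2) (L / 4));
    [nra | lra | lra|].
  intros T. destruct (Hnear T) as [a [HTa [Ha Hint]]].
  assert (HI : forall t, a <= t <= a + L ->
            Rabs (fs (x t) - fs p) < k /\ Rabs (Nprod (x t) - Nprod p) < Nprod p / 2).
  { intros t Ht. specialize (Hint t Ht). split.
    - apply H1. eapply Rlt_le_trans; [exact Hint|apply Rmin_l].
    - apply H2. eapply Rlt_le_trans; [exact Hint|apply Rmin_r]. }
  assert (Hsub : exists b, a <= b /\ b + L / 4 <= a + L /\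
            forall t, b <= t <= b + L / 4 -> (k * L / 4) ^ 2 <= sig (x t) ^ 2).
  { destruct (Rlt_le_dec 0 (fs p)) as [Hpos|Hneg].
    - apply (ramp_sqr_lower (fun u => sig (x u)) (fun u => fs (x u))); auto.
      + intros t Ht. apply Hd. lra.
      + intros t Ht. destruct (HI t Ht) as [A _]. apply Rabs_def2 in A.
        unfold k in *. rewrite Rabs_right in * by lra. lra.
    - destruct (ramp_sqr_lower (fun u => - sig (x u)) (fun u => - fs (x u)) a L k HL Hk)
        as [b [B1 [B2 B3]]].
      + intros t Ht. apply dlim_opp, Hd. lra.
      + intros t Ht. destruct (HI t Ht) as [A _]. apply Rabs_def2 in A.
        unfold k in *. rewrite Rabs_left in * by lra. lra.
      + exists b. split; [easy|]. split; [easy|]. intros t Ht.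
        specialize (B3 t Ht). simpl in B3. nra. }
  destruct Hsub as [b [B1 [B2 B3]]].
  exists b. split; [lra|]. split; [lra|]. intros t Ht. split.
  - specialize (B3 t Ht). specialize (Hq t ltac:(lra)). lra.
  - destruct (HI t ltac:(lra)) as [_ A]. apply Rabs_def2 in A. lra.
Qed.

Lemma omega_limit_Nprod_zero p : omega_limit x p -> Nprod p = 0.
Proof.
  intros Ho.
  destruct (omega_limit_closure_B_IX p Ho)
    as [[hs [hg hO]] [n1 [n2 [n3 hH]]]].
  apply NNPP. intros HM0.
  assert (HM : 0 < Nprod p).
  { enough (0 <= Nprod p) by lra. unfold Nprod. apply Rmult_le_pos; [apply Rmult_le_pos|]; lra. }
  assert (m1 : sN1 p <> 0) by (intros e; apply HM0; unfold Nprod; rewrite e; ring).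
  assert (m2 : sN2 p <> 0) by (intros e; apply HM0; unfold Nprod; rewrite e; ring).
  assert (m3 : sN3 p <> 0) by (intros e; apply HM0; unfold Nprod; rewrite e; ring).
  destruct (Rle_lt_or_eq_dec _ _ (qbar_nonneg w p (proj1 hw) hO)) as [Hq|Hq].
  { exact (omega_limit_qbar_pos p Ho HM Hq). }
  destruct (qbar_zero_inv w p (proj1 hw) hO (eq_sym Hq)) as (s1 & s2 & s3 & hO0).
  pose proof (fun (t : R) (Ht : 0 <= t) => qbar_ge_shear w (x t) (proj1 hw)
    (proj2 (proj2 (proj1 (hB t Ht))))) as Hq3.
  destruct (admissible_S3_nonzero p (conj hs (conj hg hO)) ltac:(lra) ltac:(lra) ltac:(lra) s1 s2 s3 hO0)
    as [Hne|[Hne|Hne]]; apply Hne.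
  - replace (S3_1 p) with (fS1 w p) by (unfold fS1; rewrite s1; ring).
    apply (omega_limit_shear_drift p sS1); auto.
    + intros t Ht. apply (hsol t Ht).
    + unfold fS1, qbar, Omega, Sig2, Fbar, S3_1. continuous_st_tac.
    + intros t Ht. apply (Hq3 t Ht).
  - replace (S3_2 p) with (fS2 w p) by (unfold fS2; rewrite s2; ring).
    apply (omega_limit_shear_drift p sS2); auto.
    + intros t Ht. apply (hsol t Ht).
    + unfold fS2, qbar, Omega, Sig2, Fbar, S3_2. continuous_st_tac.
    + intros t Ht. apply (Hq3 t Ht).
  - replace (S3_3 p) with (fS3 w p) by (unfold fS3; rewrite s3; ring).
    apply (omega_limit_shear_drift p sS3); auto.
    + intros t Ht. apply (hsol t Ht).
    + unfold fS3, qbar, Omega, Sig2, Fbar, S3_3. continuous_st_tac.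
    + intros t Ht. apply (Hq3 t Ht).
Qed.

End OmegaLimit.

(** * Approximation by Bianchi VII_0 states *)

(* Shrink the shear by [mu = 1 - eta] to make room in [Omega >= 0], push both
   nonnegative [N]'s up by [eta / 10], and recompute [H] from the Gauss constraint. *)
Lemma perturb_into_VII0 H S1 S2 S3 a b eps : 0 <= a -> 0 <= b -> 0 <= H ->
  H ^ 2 + a * b / 6 = 1 -> (S1 ^ 2 + S2 ^ 2 + S3 ^ 2) / 6 + (a ^ 2 + b ^ 2) / 12 <= 1 ->
  0 < eps ->
  exists mu a' b' H', 0 < a' /\ 0 < b' /\ 0 < H' /\ H' ^ 2 + a' * b' / 6 = 1 /\
    mu ^ 2 * (S1 ^ 2 + S2 ^ 2 + S3 ^ 2) / 6 + (a' ^ 2 + b' ^ 2) / 12 <= 1 /\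
    (H - H') ^ 2 + (S1 - mu * S1) ^ 2 + (S2 - mu * S2) ^ 2 + (S3 - mu * S3) ^ 2 +
    (a - a') ^ 2 + (b - b') ^ 2 < eps.
Proof.
  intros ha hb hH hg hO heps.
  set (X := S1 ^ 2 + S2 ^ 2 + S3 ^ 2) in *.
  assert (hX : 0 <= X)
    by (unfold X; pose proof (pow2_ge_0 S1); pose proof (pow2_ge_0 S2);
        pose proof (pow2_ge_0 S3); lra).
  assert (a4 : a <= 4) by nra. assert (b4 : b <= 4) by nra.
  assert (ab6 : a * b <= 6) by nra.
  set (eta := Rmin (1/2) (eps / 100)).
  assert (he : 0 < eta) by (apply Rmin_glb_lt; lra).
  assert (he1 : eta <= 1/2) by apply Rmin_l. assert (he2 : eta <= eps / 100) by apply Rmin_r.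
  set (mu := 1 - eta). set (e := eta / 10).
  set (a' := mu * a + e). set (b' := mu * b + e).
  assert (hmu : 1/2 <= mu < 1) by (unfold mu; lra).
  assert (hmu2 : mu ^ 2 = 1 - 2 * eta + eta ^ 2) by (unfold mu; ring).
  assert (he3 : eta ^ 2 <= eta / 2) by nra.
  assert (he4 : 0 < e <= 1/20) by (unfold e; lra).
  assert (hab : a' * b' = mu ^ 2 * (a * b) + mu * e * (a + b) + e * e) by (unfold a', b'; ring).
  assert (hab1 : 0 <= mu * e * (a + b) <= e * 8).
  { split; [apply Rmult_le_pos; nra|]. apply (Rmult_le_compat (mu * e) e (a + b) 8); nra. }
  assert (hmuab : mu ^ 2 * (a * b) <= mu ^ 2 * 6) by (apply Rmult_le_compat_l; nra).
  assert (hee : e * e <= e) by nra.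
  assert (hpos : 0 < 1 - a' * b' / 6) by (rewrite hab; unfold e in *; lra).
  set (H' := sqrt (1 - a' * b' / 6)).
  assert (hH' : 0 < H') by (apply sqrt_lt_R0; auto).
  assert (hH'2 : H' ^ 2 = 1 - a' * b' / 6)
    by (unfold H'; rewrite <- Rsqr_pow2; apply Rsqr_sqrt; lra).
  exists mu, a', b', H'.
  split; [unfold a'; nra|]. split; [unfold b'; nra|]. split; [easy|]. split; [lra|]. split.
  - assert (A1 : a' ^ 2 <= mu ^ 2 * a ^ 2 + 9 * e).
    { unfold a'. assert (mu * e * a <= e * 4) by (apply (Rmult_le_compat (mu * e) e a 4); nra).
      nra. }
    assert (B1 : b' ^ 2 <= mu ^ 2 * b ^ 2 + 9 * e).
    { unfold b'. assert (mu * e * b <= e * 4) by (apply (Rmult_le_compat (mu * e) e b 4); nra).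
      nra. }
    assert (mu ^ 2 * (X / 6 + (a ^ 2 + b ^ 2) / 12) <= mu ^ 2) by nra.
    unfold e in *. nra.
  - assert (D1 : (H - H') ^ 2 <= Rabs (H ^ 2 - H' ^ 2))
      by (unfold Rabs; destruct Rcase_abs; nra).
    assert (D2 : Rabs (H ^ 2 - H' ^ 2) <= 3 * eta).
    { apply Rabs_le. rewrite hH'2.
      replace (H ^ 2) with (1 - a * b / 6) by lra. rewrite hab.
      assert (0 <= (1 - mu ^ 2) * (a * b) <= (2 * eta) * 6).
      { split; [apply Rmult_le_pos; nra|]. apply Rmult_le_compat; nra. }
      unfold e in *. split; nra. }
    assert (D3 : (S1 - mu * S1) ^ 2 + (S2 - mu * S2) ^ 2 + (S3 - mu * S3) ^ 2 = eta ^ 2 * X)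
      by (unfold mu, X; ring).
    assert (D4 : (a - a') ^ 2 <= 40 * eta ^ 2) by (unfold a', mu, e; nra).
    assert (D5 : (b - b') ^ 2 <= 40 * eta ^ 2) by (unfold b', mu, e; nra).
    nra.
Qed.

Lemma in_closure_N1N2 p : admissible p -> 0 <= sN1 p -> 0 <= sN2 p -> sN3 p = 0 ->
  0 <= sH p -> in_closure B_N1N2 p.
Proof.
  intros [hs [hg hO]] n1 n2 n3 hH eps heps.
  unfold Omega, Sig2 in hO. rewrite n3 in hg, hO.
  destruct (perturb_into_VII0 (sH p) (sS1 p) (sS2 p) (sS3 p) (sN1 p) (sN2 p) eps n1 n2 hH
              ltac:(lra) ltac:(lra) heps) as (mu & a & b & H & ha & hb & hH' & hg' & hO' & hd).
  exists (mkst H (mu * sS1 p) (mu * sS2 p) (mu * sS3 p) a b 0). split.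
  - unfold B_N1N2, admissible, Omega, Sig2; cbn [sH sS1 sS2 sS3 sN1 sN2 sN3].
    repeat split; try lra.
    transitivity (mu * (sS1 p + sS2 p + sS3 p)); [ring|]. rewrite hs. ring.
  - unfold dist2; cbn [sH sS1 sS2 sS3 sN1 sN2 sN3]. rewrite n3. lra.
Qed.

Definition rotate (p : st) : st :=
  mkst (sH p) (sS2 p) (sS3 p) (sS1 p) (sN2 p) (sN3 p) (sN1 p).

Lemma admissible_rotate p : admissible (rotate p) <-> admissible p.
Proof.
  unfold admissible, Omega, Sig2, rotate; cbn [sH sS1 sS2 sS3 sN1 sN2 sN3].
  replace (sS2 p + sS3 p + sS1 p) with (sS1 p + sS2 p + sS3 p) by ring.
  replace (sN2 p * sN3 p + sN2 p * sN1 p + sN3 p * sN1 p)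
    with (sN1 p * sN2 p + sN1 p * sN3 p + sN2 p * sN3 p) by ring.
  replace (sS2 p ^ 2 + sS3 p ^ 2 + sS1 p ^ 2) with (sS1 p ^ 2 + sS2 p ^ 2 + sS3 p ^ 2) by ring.
  replace (sN2 p ^ 2 + sN3 p ^ 2 + sN1 p ^ 2) with (sN1 p ^ 2 + sN2 p ^ 2 + sN3 p ^ 2) by ring.
  tauto.
Qed.

Lemma B_N1N2_rotate q : B_N1N2 (rotate q) -> B_N2N3 q.
Proof. intros [hq H]. rewrite admissible_rotate in hq. exact (conj hq H). Qed.

Lemma B_N2N3_rotate q : B_N2N3 (rotate q) -> B_N3N1 q.
Proof. intros [hq H]. rewrite admissible_rotate in hq. exact (conj hq H). Qed.

Lemma in_closure_impl (P Q : st -> Prop) p : (forall q, P q -> Q q) ->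
  in_closure P p -> in_closure Q p.
Proof.
  intros HPQ Hc eps heps. destruct (Hc eps heps) as [q [Hq Hd]]. exists q. auto.
Qed.

Lemma in_closure_rotate (P Q : st -> Prop) p : (forall q, P (rotate q) -> Q q) ->
  in_closure P (rotate p) -> in_closure Q p.
Proof.
  intros HPQ Hc eps heps. destruct (Hc eps heps) as [q [Hq Hd]].
  exists (rotate (rotate q)). split.
  - apply HPQ. now destruct q.
  - destruct q. unfold dist2 in *; simpl in *. lra.
Qed.

Lemma in_closure_VII0 p : admissible p -> 0 <= sN1 p -> 0 <= sN2 p -> 0 <= sN3 p ->
  0 <= sH p -> Nprod p = 0 -> in_closure B_VII0 p.
Proof.
  intros ha n1 n2 n3 hH hM. unfold Nprod in hM.
  apply Rmult_integral in hM as [hM|h3]; [apply Rmult_integral in hM as [h1|h2]|].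
  - apply (in_closure_rotate B_N1N2); [intros q Hq; right; left; now apply B_N1N2_rotate|].
    apply in_closure_N1N2; try easy. now rewrite admissible_rotate.
  - apply (in_closure_rotate B_N2N3); [intros q Hq; right; right; now apply B_N2N3_rotate|].
    apply (in_closure_rotate B_N1N2 B_N2N3 _ B_N1N2_rotate).
    apply in_closure_N1N2; try easy. now rewrite !admissible_rotate.
  - apply (in_closure_impl B_N1N2); [now left|].
    now apply in_closure_N1N2.
Qed.

Theorem lemma2 (w : R) (hw : -1/3 < w < 1) (x : R -> st)
  (hsol : is_solution w x) (h0 : B_IX (x 0)) :
  (exists p, omega_limit x p) /\
  (forall p, omega_limit x p -> in_closure B_VII0 p).
Proof.
  split.
  - apply (omega_limit_exists x 4). intros t Ht.
    destruct (B_IX_bounded w (x t) hw (solution_B_IX w x hsol h0 (proj1 hw) t Ht))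
      as [hH h1 h2 h3 n1 n2 n3 _].
    repeat split; solve [apply Rabs_le; lra | lra].
  - intros p Ho.
    destruct (omega_limit_closure_B_IX w x hw hsol h0 p Ho) as [ha [n1 [n2 [n3 hH]]]].
    apply in_closure_VII0; auto.
    exact (omega_limit_Nprod_zero w x hw hsol h0 p Ho).
Qed.
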